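(* Let $\mathbf p$ be an agreeable memory-one strategy for X with $p_2<1$. (a) If $\mathbf p$ is good, then whenever Y uses a memory-one strategy $\mathbf q$ that is not agreeable (with any initial plays), every associated limit distribution gives $s_Y<R$. (b) If $\mathbf p$ is not good, then for at least one of the two memory-one strategies $\mathbf q=(0,0,0,0)$ or $\mathbf q=(0,1,1,1)$ for Y, every associated limit distribution gives $s_Y\ge R$ and $s_X<R$. (c) If $\mathbf p$ is not of Nash type, then for at least one of the two memory-one strategies $\mathbf q=(0,0,0,0)$ or $\mathbf q=(0,1,1,1)$ for Y, every associated limit distribution gives $s_Y>R$ and $s_X<R$.
   Context: Iterated Prisoner's Dilemma: payoffs $T>R>P>S$ with $2R>T+S$; outcomes of a round are ordered $cc,cd,dc,dd$ (first letter X's play, second Y's; $c$ = cooperate, $d$ = defect); payoff vectors $\mathbf S_X=(R,S,T,P)$, $\mathbf S_Y=(R,T,S,P)$. A memory-one strategy for X is $\mathbf p=(p_1,p_2,p_3,p_4)\in[0,1]^4$, where $p_i$ is the probability that X plays $c$ in the next round given that the current round had the $i$-th outcome. A memory-one strategy for Y is $\mathbf q=(q_1,q_2,q_3,q_4)\in[0,1]^4$ where $q_1,q_2,q_3,q_4$ are the probabilities that Y plays $c$ after the outcomes $cc,dc,cd,dd$ respectively (i.e. indexed from Y's own perspective). A strategy pattern for Y is an arbitrary (possibly randomized and history-dependent) rule for Y's play in each round. Given initial plays and the rules used, let $\mathbf v^n$ be the probability distribution of the outcome of round $n$; a limit distribution is any limit point $\mathbf v$ of the Cesàro averages $\frac1n\sum_{k=1}^n\mathbf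 v^k$, and the associated expected payoffs are $s_X=\langle\mathbf v\cdot\mathbf S_X\rangle$, $s_Y=\langle\mathbf v\cdot\mathbf S_Y\rangle$. A strategy is agreeable if its first entry is $1$. $\mathbf p$ is of Nash type if it is agreeable and, for every strategy pattern of Y and every associated limit distribution, $s_Y\ge R$ implies $s_Y=R$. $\mathbf p$ is good if it is agreeable and, for every strategy pattern of Y and every associated limit distribution, $s_Y\ge R$ implies $s_Y=s_X=R$. *)

From Stdlib Require Import Reals List.
Import ListNotations.
Open Scope R_scope.

(* Outcomes of a round, X's play first: cc, cd, dc, dd. *)
Inductive outcome : Set := CC | CD | DC | DD.

Definition outcomes : list outcome := [CC; CD; DC; DD].

Definition is_prob (x : R) : Prop := 0 <= x <= 1.

(* A memory-one strategy for X: p o = probability X plays c after outcome o,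
   i.e. p CC = p1, p CD = p2, p DC = p3, p DD = p4. *)
Definition memory_one (p : outcome -> R) : Prop := forall o, is_prob (p o).

(* Y's memory-one vector q = (q1,q2,q3,q4) is indexed from Y's perspective:
   q1,q2,q3,q4 are used after outcomes cc, dc, cd, dd (X's play written first). *)
Definition qvec (q1 q2 q3 q4 : R) : outcome -> R :=
  fun o => match o with CC => q1 | DC => q2 | CD => q3 | DD => q4 end.

(* A history is the list of outcomes so far, MOST RECENT FIRST. *)
Definition history := list outcome.

(* A strategy pattern for Y (behavioural form): the probability that Y
   cooperates in the next round, as an arbitrary function of the history. *)
Definition pattern := history -> R.
Definition valid_pattern (y : pattern) : Prop := forall h, is_prob (y h).

(* Y using the memory-one strategy with outcome-indexed vector q and
   initial play y0 (true = c). *)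
Definition ymem1 (q : outcome -> R) (y0 : bool) : pattern :=
  fun h => match h with [] => if y0 then 1 else 0 | o :: _ => q o end.

Definition xprob (p : outcome -> R) (x0 : bool) (h : history) : R :=
  match h with [] => if x0 then 1 else 0 | o :: _ => p o end.

Definition step (a b : R) (o : outcome) : R :=
  match o with
  | CC => a * b | CD => a * (1 - b) | DC => (1 - a) * b | DD => (1 - a) * (1 - b)
  end.

Fixpoint hprob (p : outcome -> R) (x0 : bool) (y : pattern) (h : history) : R :=
  match h with
  | [] => 1
  | o :: h' => hprob p x0 y h' * step (xprob p x0 h') (y h') o
  end.

Fixpoint histories (n : nat) : list history :=
  match n with
  | O => [[]]
  | S k => flat_map (fun h => map (fun o => o :: h) outcomes) (histories k)
  end.

Definition sumR (l : list R) : R := fold_right Rplus 0 l.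

(* v^(k+1): distribution of the outcome of round k+1. *)
Definition vround (p : outcome -> R) (x0 : bool) (y : pattern) (k : nat) (o : outcome) : R :=
  sumR (map (fun h => hprob p x0 y h * step (xprob p x0 h) (y h) o) (histories k)).

Definition cesaro (p : outcome -> R) (x0 : bool) (y : pattern) (n : nat) (o : outcome) : R :=
  / INR (S n) * sumR (map (fun k => vround p x0 y k o) (seq 0 (S n))).

Definition limit_point (a : nat -> outcome -> R) (v : outcome -> R) : Prop :=
  forall eps, eps > 0 -> forall N : nat, exists n : nat,
    (N <= n)%nat /\ forall o, Rabs (a n o - v o) < eps.

Definition limit_dist (p : outcome -> R) (x0 : bool) (y : pattern) (v : outcome -> R) : Prop :=
  limit_point (cesaro p x0 y) v.

(* Expected payoffs, S_X = (R,S,T,P), S_Y = (R,T,S,P). *)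
Definition sX (T Rw P S : R) (v : outcome -> R) : R :=
  v CC * Rw + v CD * S + v DC * T + v DD * P.
Definition sY (T Rw P S : R) (v : outcome -> R) : R :=
  v CC * Rw + v CD * T + v DC * S + v DD * P.

Definition agreeable (p : outcome -> R) : Prop := p CC = 1.

Definition nash_type (T Rw P S : R) (p : outcome -> R) : Prop :=
  agreeable p /\
  forall (x0 : bool) (y : pattern) (v : outcome -> R),
    valid_pattern y -> limit_dist p x0 y v ->
    sY T Rw P S v >= Rw -> sY T Rw P S v = Rw.

Definition good (T Rw P S : R) (p : outcome -> R) : Prop :=
  agreeable p /\
  forall (x0 : bool) (y : pattern) (v : outcome -> R),
    valid_pattern y -> limit_dist p x0 y v ->
    sY T Rw P S v >= Rw -> sY T Rw P S v = Rw /\ sX T Rw P S v = Rw.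

(* Akin's lemma: whatever Y does, every limit distribution v satisfies
   <v, p - e12> = 0, because the Cesaro average of the per-round differences
   "X cooperates in round k+1" minus "X cooperates in round k" telescopes.
   With p1 = 1 and v a probability vector this rewrites as
     (1 - p2) (s_Y - R) = v3 ((T-R) p3 - (R-S)(1-p2)) + v4 ((T-R) p4 - (R-P)(1-p2)),
   so the signs of the two coefficients decide everything: if both are
   negative p is good, if both are nonpositive p is of Nash type, and
   otherwise Y exploits p with AllD (when the p4-coefficient is
   nonnegative) or with (0,1,1,1) (when the p3-coefficient is).  For part (a),
   s_X = s_Y = R forces v = (1,0,0,0) since 2R > T + S, and then Akin's
   lemma for Y's memory-one strategy forces q1 = 1. *)
From Stdlib Require Import Reals List Lra Lia.
Open Scope R_scope.

Definition dot (v w : outcome -> R) : R :=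
  v CC * w CC + v CD * w CD + v DC * w DC + v DD * w DD.

Definition distribution (v : outcome -> R) : Prop :=
  0 <= v CC /\ 0 <= v CD /\ 0 <= v DC /\ 0 <= v DD /\
  v CC + v CD + v DC + v DD = 1.

Lemma sumR_map_ext {A} (f g : A -> R) l :
  (forall x, f x = g x) -> sumR (map f l) = sumR (map g l).
Proof. intros H; induction l; simpl; [reflexivity | rewrite H, IHl; reflexivity]. Qed.

Lemma sumR_map_sub {A} (f g : A -> R) l :
  sumR (map (fun x => f x - g x) l) = sumR (map f l) - sumR (map g l).
Proof. induction l; simpl; [ring | rewrite IHl; ring]. Qed.

Lemma sumR_map_le {A} (f g : A -> R) l :
  (forall x, f x <= g x) -> sumR (map f l) <= sumR (map g l).
Proof. intros H; induction l; simpl; [lra | specialize (H a); lra]. Qed.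

Lemma sumR_map_nonneg {A} (f : A -> R) l :
  (forall x, 0 <= f x) -> 0 <= sumR (map f l).
Proof. intros H; induction l; simpl; [lra | specialize (H a); lra]. Qed.

Lemma sumR_map_eq0 {A} (f : A -> R) l :
  (forall x, In x l -> f x = 0) -> sumR (map f l) = 0.
Proof.
  intros H; induction l as [|a l IH]; simpl; [reflexivity|].
  rewrite H by (left; reflexivity). rewrite IH by (intros; apply H; right; assumption). ring.
Qed.

Lemma sumR_seq_const1 m n : sumR (map (fun _ : nat => 1) (seq m n)) = INR n.
Proof.
  revert m; induction n; intros m; [reflexivity|].
  cbn [seq map sumR]. rewrite S_INR. simpl. rewrite IHn. ring.
Qed.

Lemma sumR_seq_telescope (C : nat -> R) m n :
  sumR (map (fun k => C (S k) - C k) (seq m n)) = C (m + n)%nat - C m.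
Proof.
  revert m; induction n; intros m; simpl.
  - rewrite Nat.add_0_r; ring.
  - rewrite IHn, Nat.add_succ_r. simpl. ring.
Qed.

Lemma dot_sumR {A} (F : A -> outcome -> R) l w :
  dot (fun o => sumR (map (fun x => F x o) l)) w = sumR (map (fun x => dot (F x) w) l).
Proof. induction l; unfold dot in *; simpl; [ring | rewrite <- IHl; ring]. Qed.

Lemma sumR_histories_S (G : history -> R) k :
  sumR (map G (histories (S k))) =
  sumR (map (fun h => G (CC :: h) + G (CD :: h) + G (DC :: h) + G (DD :: h)) (histories k)).
Proof.
  simpl. induction (histories k) as [|h l IH]; simpl; [reflexivity | rewrite IH; ring].
Qed.

Lemma limit_point_dot_approx (a : nat -> outcome -> R) v w :
  limit_point a v -> (forall o, -1 <= w o <= 1) ->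
  forall eps, eps > 0 -> forall N : nat,
  exists n, (N <= n)%nat /\ Rabs (dot (a n) w - dot v w) < eps.
Proof.
  intros Hlp Hw eps Heps N.
  destruct (Hlp (eps / 8) ltac:(lra) N) as [n [Hn Ho]].
  exists n; split; [exact Hn|].
  assert (B : forall o, - (eps / 8) <= (a n o - v o) * w o <= eps / 8).
  { intros o. destruct (Rabs_def2 _ _ (Ho o)). specialize (Hw o). split; nra. }
  pose proof (B CC); pose proof (B CD); pose proof (B DC); pose proof (B DD).
  apply Rabs_def1; unfold dot; lra.
Qed.

Lemma limit_point_dot (a : nat -> outcome -> R) v w c C :
  0 <= C -> (forall o, -1 <= w o <= 1) ->
  (forall n, Rabs (dot (a n) w - c) <= C * / INR (S n)) ->
  limit_point a v -> dot v w = c.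
Proof.
  intros HC Hw Hb Hlp. apply cond_eq. intros eps Heps.
  destruct (archimed_cor1 (eps / (2 * (C + 1)))) as [N [HN HN0]].
  { apply Rdiv_lt_0_compat; lra. }
  destruct (limit_point_dot_approx a v w Hlp Hw (eps / 2) ltac:(lra) N) as [n [Hn Hv]].
  assert (HI : / INR (S n) <= / INR N).
  { apply Rinv_le_contravar; [apply lt_0_INR; lia | apply le_INR; lia]. }
  assert (HCn : C * / INR (S n) < eps / 2).
  { assert (C * / INR N <= C * (eps / (2 * (C + 1)))) by (apply Rmult_le_compat_l; lra).
    assert (C * (eps / (2 * (C + 1))) < eps / 2).
    { assert (0 < eps / (2 * (C + 1))) by (apply Rdiv_lt_0_compat; lra).
      replace (C * (eps / (2 * (C + 1)))) with (eps / 2 - eps / (2 * (C + 1)))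
        by (field; lra).
      lra. }
    assert (C * / INR (S n) <= C * / INR N) by (apply Rmult_le_compat_l; lra).
    lra. }
  specialize (Hb n).
  replace (dot v w - c) with ((dot (a n) w - c) - (dot (a n) w - dot v w)) by ring.
  pose proof (Rabs_triang (dot (a n) w - c) (- (dot (a n) w - dot v w))) as Htri.
  rewrite Rabs_Ropp in Htri. unfold Rminus at 1. lra.
Qed.

Lemma limit_point_nonneg (a : nat -> outcome -> R) v o :
  (forall n, 0 <= a n o) -> limit_point a v -> 0 <= v o.
Proof.
  intros H Hlp. destruct (Rle_lt_dec 0 (v o)) as [|Hl]; [assumption|].
  destruct (Hlp (- v o) ltac:(lra) 0%nat) as [n [_ Ho]].
  destruct (Rabs_def2 _ _ (Ho o)). specialize (H n). lra.
Qed.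

Section Rounds.

Variables (p : outcome -> R) (x0 : bool) (y : pattern).
Hypotheses (Hp : memory_one p) (Hy : valid_pattern y).

Lemma step_nonneg a b o : 0 <= a <= 1 -> 0 <= b <= 1 -> 0 <= step a b o.
Proof. intros; destruct o; simpl; nra. Qed.

Lemma xprob_prob h : 0 <= xprob p x0 h <= 1.
Proof. destruct h; simpl; [destruct x0; lra | apply Hp]. Qed.

Lemma hprob_nonneg h : 0 <= hprob p x0 y h.
Proof.
  induction h; simpl; [lra|].
  apply Rmult_le_pos; [exact IHh | apply step_nonneg; [apply xprob_prob | apply Hy]].
Qed.

Lemma sumR_hprob k : sumR (map (hprob p x0 y) (histories k)) = 1.
Proof.
  induction k; [simpl; ring|].
  rewrite sumR_histories_S, <- IHk. apply sumR_map_ext. intros h. simpl. ring.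
Qed.

Lemma vround_dot k w : dot (vround p x0 y k) w =
  sumR (map (fun h => hprob p x0 y h * dot (step (xprob p x0 h) (y h)) w) (histories k)).
Proof.
  unfold vround. rewrite dot_sumR. apply sumR_map_ext. intros h. unfold dot. ring.
Qed.

Lemma cesaro_dot n w : dot (cesaro p x0 y n) w =
  / INR (S n) * sumR (map (fun k => dot (vround p x0 y k) w) (seq 0 (S n))).
Proof.
  unfold cesaro. rewrite <- (dot_sumR (vround p x0 y)). unfold dot. ring.
Qed.

Lemma vround_nonneg k o : 0 <= vround p x0 y k o.
Proof.
  apply sumR_map_nonneg. intros h. apply Rmult_le_pos; [apply hprob_nonneg|].
  apply step_nonneg; [apply xprob_prob | apply Hy].
Qed.

Lemma vround_total k : dot (vround p x0 y k) (fun _ => 1) = 1.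
Proof.
  rewrite vround_dot. transitivity (sumR (map (hprob p x0 y) (histories k))).
  - apply sumR_map_ext. intros h. unfold dot; simpl. ring.
  - apply sumR_hprob.
Qed.

Lemma limit_dist_distribution v : limit_dist p x0 y v -> distribution v.
Proof.
  intros Hv.
  assert (Hnn : forall o, 0 <= v o).
  { intros o. apply (limit_point_nonneg (cesaro p x0 y)); [|exact Hv]. intros n.
    apply Rmult_le_pos.
    - left. apply Rinv_0_lt_compat, lt_0_INR. lia.
    - apply sumR_map_nonneg. intros k. apply vround_nonneg. }
  assert (Htot : dot v (fun _ => 1) = 1).
  { apply (limit_point_dot (cesaro p x0 y) v _ 1 0); [lra | intros; lra | | exact Hv].
    intros n. rewrite cesaro_dot, (sumR_map_ext _ (fun _ => 1)) by (intros; apply vround_total).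
    rewrite sumR_seq_const1, Rinv_l by (apply not_0_INR; lia).
    rewrite Rminus_diag, Rabs_R0. lra. }
  unfold dot in Htot. repeat split; try apply Hnn. lra.
Qed.

Definition indicator (o : outcome) : outcome -> R :=
  fun o' => match o, o' with
            | CC, CC | CD, CD | DC, DC | DD, DD => 1
            | _, _ => 0
            end.

Lemma dot_indicator v o : dot v (indicator o) = v o.
Proof. destruct o; unfold dot; simpl; ring. Qed.

Lemma limit_dist_null_after_round1 o v :
  (forall k, vround p x0 y (S k) o = 0) -> limit_dist p x0 y v -> v o = 0.
Proof.
  intros Hnull Hv. rewrite <- dot_indicator.
  apply (limit_point_dot (cesaro p x0 y) v _ 0 1); [lra | | | exact Hv].
  { intros o'; destruct o, o'; simpl; lra. }
  intros n. rewrite cesaro_dot. cbn [seq map sumR fold_right].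
  rewrite (sumR_map_eq0 (fun k => dot (vround p x0 y k) (indicator o))).
  2: { intros k Hk. apply in_seq in Hk. destruct k as [|k]; [lia|].
       rewrite dot_indicator. apply Hnull. }
  rewrite dot_indicator, Rplus_0_r, Rminus_0_r.
  pose proof (limit_dist_distribution _ Hv).
  pose proof (vround_total 0).
  pose proof (vround_nonneg 0 CC); pose proof (vround_nonneg 0 CD).
  pose proof (vround_nonneg 0 DC); pose proof (vround_nonneg 0 DD).
  assert (Hle : 0 <= vround p x0 y 0 o <= 1) by (unfold dot in *; destruct o; lra).
  assert (0 < / INR (S n)) by (apply Rinv_0_lt_compat, lt_0_INR; lia).
  rewrite Rabs_right by nra. nra.
Qed.

(* [f h] is the probability that a player cooperates after history [h], [g] its
   memory-one vector and [e] the indicator of that player cooperating in the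
   current outcome; then [dot (vround k) (g - e)] is the increase of that
   probability from round k+1 to round k+2. *)
Lemma akin_telescope f g e v :
  (forall h, 0 <= f h <= 1) ->
  (forall o h, f (o :: h) = g o) ->
  (forall h, dot (step (xprob p x0 h) (y h)) e = f h) ->
  (forall o, -1 <= g o - e o <= 1) ->
  limit_dist p x0 y v -> dot v (fun o => g o - e o) = 0.
Proof.
  intros Hf Hfg He Hb Hv.
  set (F k := sumR (map (fun h => hprob p x0 y h * f h) (histories k))).
  assert (HF : forall k, 0 <= F k <= 1).
  { intros k. split.
    - apply sumR_map_nonneg. intros h.
      apply Rmult_le_pos; [apply hprob_nonneg | apply Hf].
    - rewrite <- (sumR_hprob k). apply sumR_map_le. intros h.
      pose proof (hprob_nonneg h). pose proof (Hf h). nra. }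
  assert (Hstep : forall k, dot (vround p x0 y k) (fun o => g o - e o) = F (S k) - F k).
  { intros k. rewrite vround_dot. unfold F. rewrite sumR_histories_S, <- sumR_map_sub.
    apply sumR_map_ext. intros h. rewrite !Hfg, <- He. unfold dot. simpl. ring. }
  apply (limit_point_dot (cesaro p x0 y) v _ 0 1); [lra | exact Hb | | exact Hv].
  intros n. rewrite cesaro_dot, (sumR_map_ext _ _ _ Hstep), sumR_seq_telescope.
  simpl (0 + S n)%nat. pose proof (HF (S n)); pose proof (HF 0%nat).
  assert (0 < / INR (S n)) by (apply Rinv_0_lt_compat, lt_0_INR; lia).
  apply Rabs_le. split; nra.
Qed.

Lemma akin_X v : limit_dist p x0 y v ->
  v CC * (p CC - 1) + v CD * (p CD - 1) + v DC * p DC + v DD * p DD = 0.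
Proof.
  intros Hv.
  assert (H : dot v (fun o => p o - match o with CC | CD => 1 | _ => 0 end) = 0).
  { apply (akin_telescope (xprob p x0)); auto.
    - intros; apply xprob_prob.
    - intros h. unfold dot; simpl. ring.
    - intros o; destruct (Hp o); destruct o; lra. }
  unfold dot in H. lra.
Qed.

End Rounds.

Lemma qvec_memory_one q1 q2 q3 q4 :
  is_prob q1 -> is_prob q2 -> is_prob q3 -> is_prob q4 -> memory_one (qvec q1 q2 q3 q4).
Proof. intros ? ? ? ? o; destruct o; simpl; assumption. Qed.

Lemma ymem1_valid q y0 : memory_one q -> valid_pattern (ymem1 q y0).
Proof. intros Hq h; destruct h; simpl; [destruct y0; unfold is_prob; lra | apply Hq]. Qed.

Lemma akin_Y p x0 q y0 v :
  memory_one p -> memory_one q -> limit_dist p x0 (ymem1 q y0) v ->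
  v CC * (q CC - 1) + v CD * q CD + v DC * (q DC - 1) + v DD * q DD = 0.
Proof.
  intros Hp Hq Hv. pose proof (ymem1_valid q y0 Hq) as Hy.
  assert (H : dot v (fun o => q o - match o with CC | DC => 1 | _ => 0 end) = 0).
  { apply (akin_telescope p x0 (ymem1 q y0) Hp Hy (ymem1 q y0)); auto.
    - intros h. unfold dot; simpl. ring.
    - intros o; destruct (Hq o); destruct o; lra. }
  unfold dot in H. lra.
Qed.

(* Against (0,1,1,1) an agreeable X never reaches dd after round 1: Y defects
   only after cc, and X cooperates after cc. *)
Lemma limit_dist_q0111_DD p x0 y0 v :
  memory_one p -> agreeable p ->
  limit_dist p x0 (ymem1 (qvec 0 1 1 1) y0) v -> v DD = 0.
Proof.
  intros Hp Hagr Hv.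
  assert (Hq : memory_one (qvec 0 1 1 1)) by (apply qvec_memory_one; unfold is_prob; lra).
  apply (limit_dist_null_after_round1 p x0 _ Hp (ymem1_valid _ y0 Hq) DD v); [|exact Hv].
  intros k. unfold vround. rewrite sumR_histories_S. apply sumR_map_eq0. intros h _.
  simpl. rewrite Hagr. ring.
Qed.

Section Payoffs.

Variables T Rw P S : R.
Hypotheses (HTR : T > Rw) (HRP : Rw > P) (HPS : P > S).

Lemma sY_excess v p2 p3 p4 :
  v CC + v CD + v DC + v DD = 1 ->
  v CD * (p2 - 1) + v DC * p3 + v DD * p4 = 0 ->
  (1 - p2) * (sY T Rw P S v - Rw) =
  v DC * ((T - Rw) * p3 - (Rw - S) * (1 - p2)) + v DD * ((T - Rw) * p4 - (Rw - P) * (1 - p2)).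
Proof.
  intros Hsum Hakin. unfold sY.
  replace (v CC) with (1 - v CD - v DC - v DD) by lra.
  transitivity ((T - Rw) * (v CD * (1 - p2)) - (1 - p2) * (v DC * (Rw - S) + v DD * (Rw - P)));
    [ring|].
  replace (v CD * (1 - p2)) with (v DC * p3 + v DD * p4) by lra. ring.
Qed.

Lemma payoffs_reward_coop v :
  2 * Rw > T + S -> distribution v ->
  sY T Rw P S v = Rw -> sX T Rw P S v = Rw -> v CC = 1.
Proof.
  intros H2R [? [? [? [? Hsum]]]] EY EX. unfold sY, sX in *.
  assert (E : (v CD + v DC) * (2 * Rw - T - S) + 2 * v DD * (Rw - P) = 0).
  { replace (v CC) with (1 - v CD - v DC - v DD) in EY, EX by lra. nra. }
  assert (v DD = 0) by nra. assert (v CD + v DC = 0) by nra. lra.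
Qed.

Section AgreeableX.

Variable p : outcome -> R.
Hypotheses (Hp : memory_one p) (Hagr : agreeable p) (Hp2 : p CD < 1).

Lemma limit_dist_sY_excess x0 y v :
  valid_pattern y -> limit_dist p x0 y v ->
  distribution v /\
  (1 - p CD) * (sY T Rw P S v - Rw) =
  v DC * ((T - Rw) * p DC - (Rw - S) * (1 - p CD)) +
  v DD * ((T - Rw) * p DD - (Rw - P) * (1 - p CD)).
Proof.
  intros Hy Hv. pose proof (limit_dist_distribution p x0 y Hp Hy v Hv) as Hd.
  split; [exact Hd|]. destruct Hd as [_ [_ [_ [_ Hsum]]]].
  apply sY_excess; [exact Hsum|].
  pose proof (akin_X p x0 y Hp Hy v Hv) as A. unfold agreeable in Hagr. rewrite Hagr in A. lra.
Qed.

Lemma good_of_strict :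
  (T - Rw) * p DC < (Rw - S) * (1 - p CD) ->
  (T - Rw) * p DD < (Rw - P) * (1 - p CD) -> good T Rw P S p.
Proof.
  intros H3 H4. split; [exact Hagr|]. intros x0 y v Hy Hv HsY.
  destruct (limit_dist_sY_excess x0 y v Hy Hv) as [[? [? [? [? Hsum]]]] E].
  assert (0 <= (1 - p CD) * (sY T Rw P S v - Rw)) by nra.
  assert (v DC = 0) by nra. assert (v DD = 0) by nra.
  pose proof (akin_X p x0 y Hp Hy v Hv) as A. unfold agreeable in Hagr. rewrite Hagr in A.
  assert (v CD = 0) by nra. assert (v CC = 1) by lra.
  unfold sY, sX. split; nra.
Qed.

Lemma nash_of_weak :
  (T - Rw) * p DC <= (Rw - S) * (1 - p CD) ->
  (T - Rw) * p DD <= (Rw - P) * (1 - p CD) -> nash_type T Rw P S p.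
Proof.
  intros H3 H4. split; [exact Hagr|]. intros x0 y v Hy Hv HsY.
  destruct (limit_dist_sY_excess x0 y v Hy Hv) as [[? [? [? [? _]]]] E].
  assert ((1 - p CD) * (sY T Rw P S v - Rw) <= 0) by nra.
  assert (sY T Rw P S v - Rw <= 0) by nra. lra.
Qed.

Lemma allD_exploits :
  (T - Rw) * p DD >= (Rw - P) * (1 - p CD) ->
  forall x0 y0 v, limit_dist p x0 (ymem1 (qvec 0 0 0 0) y0) v ->
  sY T Rw P S v >= Rw /\ sX T Rw P S v < Rw /\
  ((T - Rw) * p DD > (Rw - P) * (1 - p CD) -> sY T Rw P S v > Rw).
Proof.
  intros H4 x0 y0 v Hv.
  assert (Hq : memory_one (qvec 0 0 0 0)) by (apply qvec_memory_one; unfold is_prob; lra).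
  destruct (limit_dist_sY_excess x0 _ v (ymem1_valid _ y0 Hq) Hv) as [[? [? [? [? ?]]]] E].
  pose proof (akin_Y p x0 _ y0 v Hp Hq Hv) as B. simpl in B.
  assert (v CC = 0) by lra. assert (Z3 : v DC = 0) by lra.
  rewrite Z3, Rmult_0_l, Rplus_0_l in E.
  unfold sY, sX in *. split; [|split].
  - assert (0 <= v DD * ((T - Rw) * p DD - (Rw - P) * (1 - p CD))) by nra. nra.
  - nra.
  - intros H4'.
    assert (v DD > 0).
    { destruct (Rle_lt_dec (v DD) 0); [|lra]. assert (v CD = 1) by lra.
      pose proof (akin_X p x0 _ Hp (ymem1_valid _ y0 Hq) v Hv) as A.
      unfold agreeable in Hagr. rewrite Hagr in A. nra. }
    nra.
Qed.

Lemma q0111_exploits :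
  2 * Rw > T + S ->
  (T - Rw) * p DC >= (Rw - S) * (1 - p CD) ->
  forall x0 y0 v, limit_dist p x0 (ymem1 (qvec 0 1 1 1) y0) v ->
  sY T Rw P S v >= Rw /\ sX T Rw P S v < Rw /\
  ((T - Rw) * p DC > (Rw - S) * (1 - p CD) -> sY T Rw P S v > Rw).
Proof.
  intros H2R H3 x0 y0 v Hv.
  assert (Hq : memory_one (qvec 0 1 1 1)) by (apply qvec_memory_one; unfold is_prob; lra).
  pose proof (ymem1_valid _ y0 Hq) as Hy.
  destruct (limit_dist_sY_excess x0 _ v Hy Hv) as [[? [? [? [? Hsum]]]] E].
  pose proof (limit_dist_q0111_DD p x0 y0 v Hp Hagr Hv) as Z.
  pose proof (akin_Y p x0 _ y0 v Hp Hq Hv) as B. simpl in B.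
  pose proof (akin_X p x0 _ Hp Hy v Hv) as A. unfold agreeable in Hagr. rewrite Hagr in A.
  rewrite Z, Rmult_0_l, Rplus_0_r in E.
  assert (A' : v CD * (1 - p CD) = v DC * p DC) by (rewrite Z in A; lra).
  assert (HCC : v CC = v CD) by (rewrite Z in B; lra).
  assert (Hpos : v DC > 0).
  { destruct (Rle_lt_dec (v DC) 0) as [Hle|]; [|lra].
    assert (Z3 : v DC = 0) by lra. rewrite Z3, Rmult_0_l in A'.
    assert (v CD = 0).
    { apply (Rmult_eq_reg_r (1 - p CD)); [lra | lra]. }
    lra. }
  assert (EX : (1 - p CD) * (Rw - sX T Rw P S v) =
               v DC * ((Rw - S) * p DC - (T - Rw) * (1 - p CD))).
  { assert (Hs : 2 * v CD + v DC = 1) by lra.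
    unfold sX. rewrite HCC, Z.
    replace Rw with (Rw * (2 * v CD + v DC)) at 1 by (rewrite Hs; ring).
    transitivity ((Rw - S) * (v CD * (1 - p CD)) - (1 - p CD) * (v DC * (T - Rw))); [ring|].
    rewrite A'. ring. }
  (* (R-S)^2 > (T-R)^2 because 2R > T+S *)
  assert (K : (Rw - S) * p DC - (T - Rw) * (1 - p CD) > 0).
  { assert ((T - Rw) * ((Rw - S) * p DC) >= (Rw - S) * ((Rw - S) * (1 - p CD))) by nra.
    assert ((Rw - S) * (Rw - S) > (T - Rw) * (T - Rw)) by nra.
    nra. }
  split; [|split]; [nra | nra | intros; nra].
Qed.

Lemma good_punishes_disagreeable :
  2 * Rw > T + S -> good T Rw P S p ->
  forall q1 q2 q3 q4 : R,
    is_prob q1 -> is_prob q2 -> is_prob q3 -> is_prob q4 ->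
    ~ agreeable (qvec q1 q2 q3 q4) ->
    forall (x0 y0 : bool) (v : outcome -> R),
      limit_dist p x0 (ymem1 (qvec q1 q2 q3 q4) y0) v -> sY T Rw P S v < Rw.
Proof.
  intros H2R [_ Hg] q1 q2 q3 q4 H1 H2 H3 H4 Hna x0 y0 v Hv.
  pose proof (qvec_memory_one q1 q2 q3 q4 H1 H2 H3 H4) as Hq.
  pose proof (ymem1_valid _ y0 Hq) as Hy.
  destruct (Rlt_dec (sY T Rw P S v) Rw) as [|Hge]; [assumption|exfalso].
  destruct (Hg x0 _ v Hy Hv ltac:(lra)) as [EY EX].
  pose proof (limit_dist_distribution p x0 _ Hp Hy v Hv) as Hd.
  pose proof (payoffs_reward_coop v H2R Hd EY EX) as H1C.
  destruct Hd as [? [? [? [? ?]]]].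
  assert (Z2 : v CD = 0) by lra. assert (Z3 : v DC = 0) by lra. assert (Z4 : v DD = 0) by lra.
  pose proof (akin_Y p x0 _ y0 v Hp Hq Hv) as B. simpl in B.
  rewrite H1C, Z2, Z3, Z4 in B. apply Hna. unfold agreeable; simpl. lra.
Qed.

Lemma not_good_exploitable :
  2 * Rw > T + S -> ~ good T Rw P S p ->
  exists q : outcome -> R,
    (q = qvec 0 0 0 0 \/ q = qvec 0 1 1 1) /\
    forall (x0 y0 : bool) (v : outcome -> R),
      limit_dist p x0 (ymem1 q y0) v -> sY T Rw P S v >= Rw /\ sX T Rw P S v < Rw.
Proof.
  intros H2R Hng.
  destruct (Rlt_dec ((T - Rw) * p DD) ((Rw - P) * (1 - p CD))) as [H4|H4].
  - destruct (Rlt_dec ((T - Rw) * p DC) ((Rw - S) * (1 - p CD))) as [H3|H3].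
    + contradiction (Hng (good_of_strict H3 H4)).
    + exists (qvec 0 1 1 1). split; [now right|]. intros x0 y0 v Hv.
      now destruct (q0111_exploits H2R ltac:(lra) x0 y0 v Hv) as [? [? _]].
  - exists (qvec 0 0 0 0). split; [now left|]. intros x0 y0 v Hv.
    now destruct (allD_exploits ltac:(lra) x0 y0 v Hv) as [? [? _]].
Qed.

Lemma not_nash_exploitable :
  2 * Rw > T + S -> ~ nash_type T Rw P S p ->
  exists q : outcome -> R,
    (q = qvec 0 0 0 0 \/ q = qvec 0 1 1 1) /\
    forall (x0 y0 : bool) (v : outcome -> R),
      limit_dist p x0 (ymem1 q y0) v -> sY T Rw P S v > Rw /\ sX T Rw P S v < Rw.
Proof.
  intros H2R Hnn.
  destruct (Rle_dec ((T - Rw) * p DD) ((Rw - P) * (1 - p CD))) as [H4|H4].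
  - destruct (Rle_dec ((T - Rw) * p DC) ((Rw - S) * (1 - p CD))) as [H3|H3].
    + contradiction (Hnn (nash_of_weak H3 H4)).
    + exists (qvec 0 1 1 1). split; [now right|]. intros x0 y0 v Hv.
      destruct (q0111_exploits H2R ltac:(lra) x0 y0 v Hv) as [_ [? Hgt]].
      split; [apply Hgt; lra | assumption].
  - exists (qvec 0 0 0 0). split; [now left|]. intros x0 y0 v Hv.
    destruct (allD_exploits ltac:(lra) x0 y0 v Hv) as [_ [? Hgt]].
    split; [apply Hgt; lra | assumption].
Qed.

End AgreeableX.

End Payoffs.

Theorem corollary2p2 (T Rw P S : R) (p : outcome -> R) :
  T > Rw -> Rw > P -> P > S -> 2 * Rw > T + S ->
  memory_one p -> agreeable p -> p CD < 1 ->
  (good T Rw P S p ->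
     forall q1 q2 q3 q4 : R,
       is_prob q1 -> is_prob q2 -> is_prob q3 -> is_prob q4 ->
       ~ agreeable (qvec q1 q2 q3 q4) ->
       forall (x0 y0 : bool) (v : outcome -> R),
         limit_dist p x0 (ymem1 (qvec q1 q2 q3 q4) y0) v ->
         sY T Rw P S v < Rw) /\
  (~ good T Rw P S p ->
     exists q : outcome -> R,
       (q = qvec 0 0 0 0 \/ q = qvec 0 1 1 1) /\
       forall (x0 y0 : bool) (v : outcome -> R),
         limit_dist p x0 (ymem1 q y0) v ->
         sY T Rw P S v >= Rw /\ sX T Rw P S v < Rw) /\
  (~ nash_type T Rw P S p ->
     exists q : outcome -> R,
       (q = qvec 0 0 0 0 \/ q = qvec 0 1 1 1) /\
       forall (x0 y0 : bool) (v : outcome -> R),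
         limit_dist p x0 (ymem1 q y0) v ->
         sY T Rw P S v > Rw /\ sX T Rw P S v < Rw).
Proof.
  intros HTR HRP HPS H2R Hp Hagr Hp2. split; [|split].
  - apply good_punishes_disagreeable; assumption.
  - apply not_good_exploitable; assumption.
  - apply not_nash_exploitable; assumption.
Qed.
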